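(* Let $H$ be a linear hypertree with maximum degree $\Delta(H)=2$ and anti-rank three. Then the niche number of $H$ is $\hat{n}(H)=0$; that is, there is an acyclic digraph $D$ with $NH(D)=H$.
   Context: All hypergraphs are finite, simple (if $e\subseteq e'$ are hyperedges then $e=e'$) and have no loops (hyperedges with one vertex); isolated vertices are allowed. The degree of a vertex is the number of hyperedges containing it, and $\Delta(H)$ is the maximum degree. The anti-rank of $H$ is the minimum number of vertices in a hyperedge. $H$ is linear if $|e\cap e'|\le 1$ for all distinct hyperedges $e,e'$. $H$ is a hypertree if there is a tree $T$ with $V(T)=V(H)$ such that for every hyperedge $e$ the induced subgraph $T[e]$ is connected. A digraph has arcs $(u,v)$ with no pair of opposite arcs; it is acyclic if it has no directed cycle. For a digraph $D$, $N^-_D(v)=\{u:(u,v)\in A(D)\}$ and $N^+_D(v)=\{u:(v,u)\in A(D)\}$. The niche hypergraph $NH(D)$ of an acyclic digraph $D$ has vertex set $V(D)$ and hyperedge set $\{e\subseteq V(D): |e|\ge 2 \text{ and } e=N^-_D(v) \text{ or } e=N^+_D(v) \text{ for some } v\in V(D)\}$. The niche number $\hat n(H)$ is the minimum $k\ge 0$ such that $H$ together with $k$ additional isolated vertices is the niche hypergraph of an acyclic digraph ($\infty$ if no such $k$ exists). *)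

From mathcomp Require Import all_boot.
Set Implicit Arguments. Unset Strict Implicit. Unset Printing Implicit Defensive.

Section Hyper.
Variable T : finType.

(* A hypergraph with vertex set T (isolated vertices allowed): simple and loopless. *)
Definition simple_loopless (E : {set {set T}}) : Prop :=
  (forall e, e \in E -> 2 <= #|e|) /\
  (forall e e', e \in E -> e' \in E -> e \subset e' -> e = e').

Definition degree (E : {set {set T}}) (v : T) : nat := #|[set e in E | v \in e]|.

Definition max_degree (E : {set {set T}}) : nat := \max_(v : T) degree E v.

Definition has_antirank (E : {set {set T}}) (k : nat) : Prop :=
  (exists2 e, e \in E & #|e| = k) /\ (forall e, e \in E -> k <= #|e|).

Definition linear_hg (E : {set {set T}}) : Prop :=
  forall e e', e \in E -> e' \in E -> e != e' -> #|e :&: e'| <= 1.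

Definition is_tree (g : rel T) : Prop :=
  symmetric g /\ irreflexive g /\ (forall x y, connect g x y) /\
  ~ (exists c : seq T, [/\ cycle g c, uniq c & 3 <= size c]).

Definition induced_connected (g : rel T) (e : {set T}) : Prop :=
  forall x y, x \in e -> y \in e ->
    connect [rel a b | g a b && (a \in e) && (b \in e)] x y.

Definition hypertree (E : {set {set T}}) : Prop :=
  exists g : rel T, is_tree g /\ forall e, e \in E -> induced_connected g e.

Definition digraph (A : rel T) : Prop := forall u v, ~~ (A u v && A v u).

Definition acyclic (A : rel T) : Prop :=
  ~ (exists (x : T) (p : seq T), [/\ path A x p, last x p = x & p != [::]]).

Definition in_nbhd (A : rel T) (v : T) : {set T} := [set u | A u v].
Definition out_nbhd (A : rel T) (v : T) : {set T} := [set u | A v u].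

Definition niche_hypergraph (A : rel T) : {set {set T}} :=
  [set e : {set T} | (2 <= #|e|) &&
     [exists v, (e == in_nbhd A v) || (e == out_nbhd A v)]].

End Hyper.

From mathcomp Require Import all_boot zify.
Set Implicit Arguments. Unset Strict Implicit. Unset Printing Implicit Defensive.

(* A realization of a family F of hyperedges is a digraph on [cover F], acyclic through a
   rank function, whose neighbourhoods with at least two vertices are exactly the edges of
   F.  A star (an edge h with pendant edges) is realized directly: h is the out-neighbourhood
   of a vertex of one pendant edge, that edge is the in-neighbourhood of a vertex of h, and
   each further pendant edge is the in-neighbourhood of a spare vertex of the previous one;
   anti-rank three supplies the spare vertices.  In a linear hypertree of maximum degree two,
   a vertex u shared by edges e and f splits the edges into the branch through f and the
   rest; the two parts meet only in u, which has degree one in each.  Keeping degree-one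
   vertices sources or sinks, realizations of the two parts glue at u after reversing one
   of them if necessary, and recursion on branches reduces every connected family to stars.
   Components are then placed side by side, a single-edge component being attached as the
   in-neighbourhood of a source. *)

Lemma connect_image (U V : finType) (r : rel U) (r' : rel V) (pi : U -> V) a b :
  (forall y z, r y z -> pi y = pi z \/ r' (pi y) (pi z)) ->
  connect r a b -> connect r' (pi a) (pi b).
Proof.
move=> hpi /connectP[p hp ->]; elim: p a hp => [|c p IH] a /=; first by rewrite connect0.
move=> /andP[hac hp]; apply: connect_trans (IH c hp).
by case: (hpi a c hac) => [-> | h]; [exact: connect0 | exact: connect1].
Qed.

Lemma connect_preserved (U : finType) (r : rel U) (P : pred U) a b :
  (forall y z, P y -> r y z -> P z) -> P a -> connect r a b -> P b.
Proof.
move=> hP hPa /connectP[p hp ->]; elim: p a hPa hp => //= c p IH a hPa /andP[hac hp].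
exact: IH (hP a c hPa hac) hp.
Qed.

Lemma connect_restrict (U : finType) (r r' : rel U) (P : pred U) a b :
  (forall y z, P y -> r y z -> P z /\ r' y z) -> P a -> connect r a b -> connect r' a b.
Proof.
move=> hP hPa /connectP[p hp ->]; elim: p a hPa hp => [|c p IH] a hPa /=.
  by rewrite connect0.
move=> /andP[hac hp]; have [hPc hr'] := hP a c hPa hac.
exact: connect_trans (connect1 hr') (IH c hPc hp).
Qed.

Lemma path_crossing (U : Type) (P : pred U) (r : rel U) a p :
  path r a p -> P a -> ~~ P (last a p) -> exists y z, [/\ r y z, P y & ~~ P z].
Proof.
elim: p a => [|b p IH] a /=; first by move=> _ ->.
move=> /andP[hab hp] hPa hl; have [hPb | hPb] := boolP (P b); first exact: IH hp hPb hl.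
by exists a, b.
Qed.

Section Realization.
Variable T : finType.
Implicit Types (A B : rel T) (F G : {set {set T}}) (W X Y L h l d : {set T}) (r : T -> nat).

Lemma eq_mem_notinF X x y : x \in X -> y \notin X -> (x == y) = false.
Proof. by move=> hx hy; apply: contraNF hy => /eqP <-. Qed.

Lemma eq_notin_memF X x y : x \in X -> y \notin X -> (y == x) = false.
Proof. by move=> hx hy; rewrite eq_sym (eq_mem_notinF hx hy). Qed.

Lemma setI1_mem X Y w : X :&: Y = [set w] -> (w \in X) && (w \in Y).
Proof. by move/setP/(_ w); rewrite !inE eqxx. Qed.

Lemma setI1_eq X Y w x : X :&: Y = [set w] -> x \in X -> x \in Y -> x = w.
Proof. by move/setP/(_ x); rewrite !inE => + hX hY; rewrite hX hY => /esym/eqP. Qed.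

Lemma not_disjointP X Y : reflect (exists2 x, x \in X & x \in Y) (~~ [disjoint X & Y]).
Proof.
rewrite -setI_eq0; apply: (iffP (set0Pn _)) => [[x /setIP[]] | [x hx hy]]; first by exists x.
by exists x; apply/setIP.
Qed.

Lemma card_setD1_gt1 X w : 2 < #|X| -> 1 < #|X :\ w|.
Proof. by rewrite (cardsD1 w X); case: (w \in X) => /=; lia. Qed.

Lemma setDUK_subset F G : G \subset F -> (F :\: G) :|: G = F.
Proof.
move=> /subsetP hGF; apply/setP => X; rewrite !inE.
by case: (boolP (X \in G)) => [/hGF -> | _]; rewrite ?orbT ?orbF.
Qed.

Lemma cover_setU F G : cover (F :|: G) = cover F :|: cover G.
Proof. exact: bigcup_setU. Qed.

Lemma mem_cover F X x : X \in F -> x \in X -> x \in cover F.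
Proof. by move=> hX hx; apply/bigcupP; exists X. Qed.

Lemma simple_loopless_subset F G : F \subset G -> simple_loopless G -> simple_loopless F.
Proof.
move=> /subsetP hFG [hG2 hGsp].
by split=> [e /hFG | e e' /hFG he /hFG he']; [exact: hG2 | exact: hGsp].
Qed.

Lemma degree_subset F G x : F \subset G -> degree F x <= degree G x.
Proof.
move=> /subsetP hFG; apply: subset_leq_card; apply/subsetP => e.
by rewrite !inE => /andP[/hFG -> ->].
Qed.

Lemma degree_gt0 F e x : e \in F -> x \in e -> 0 < degree F x.
Proof. by move=> he hx; apply/card_gt0P; exists e; rewrite inE he hx. Qed.

Lemma degree_ge2 F e f x : e \in F -> f \in F -> e != f -> x \in e -> x \in f ->
  1 < degree F x.
Proof.
move=> he hf hef hxe hxf; apply/card_gt1P; exists e, f.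
by rewrite !inE he hf hxe hxf.
Qed.

Lemma degree1_edge_eq F e f x : degree F x = 1 -> e \in F -> f \in F -> x \in e -> x \in f ->
  e = f.
Proof.
move=> hx he hf hxe hxf; apply/eqP; apply: contraTT isT => hef.
by have := degree_ge2 he hf hef hxe hxf; rewrite hx.
Qed.

Lemma degree_le1 F x X : (forall Y, Y \in F -> x \in Y -> Y = X) -> degree F x <= 1.
Proof.
move=> hX; rewrite -(cards1 X); apply: subset_leq_card; apply/subsetP => Y.
by rewrite !inE => /andP[hY hxY]; rewrite (hX Y hY hxY).
Qed.

Lemma degreeD1 F L x : L \in F -> degree F x = (x \in L) + degree (F :\ L) x.
Proof.
move=> hL; rewrite /degree (cardsD1 L [set e in F | x \in e]) !inE hL /=.
by congr (_ + _); apply: eq_card => e; rewrite !inE; case: (e == L).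
Qed.

Lemma degree_eq1_subset F G x e : G \subset F -> e \in G -> x \in e ->
  degree F x = 1 -> degree G x = 1.
Proof.
move=> hGF he hx hd; apply/eqP; rewrite eqn_leq (degree_gt0 he hx) andbT -hd.
exact: degree_subset.
Qed.

Lemma pendant_meets_rest F h L w x : L \in F -> L :&: h = [set w] ->
  (forall y, y \in L -> y \notin h -> degree F y = 1) ->
  x \in L -> x \in cover (F :\ L) -> x = w.
Proof.
move=> hLF hw hL1 xL /bigcupP[Y hY xY].
have [xh | xh] := boolP (x \in h); first exact: setI1_eq hw xL xh.
have := hL1 x xL xh; rewrite (degreeD1 x hLF) xL add1n => -[] hx0.
by have := degree_gt0 hY xY; rewrite hx0.
Qed.

Lemma degree1_setD1 F L k x : L \in F -> k \in F :\ L -> x \in k -> degree F x = 1 ->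
  x \notin L /\ degree (F :\ L) x = 1.
Proof.
move=> hLF /setD1P[kL kF] xk x1.
have xL : x \notin L by apply: contra kL => xL; rewrite (degree1_edge_eq x1 kF hLF xk xL).
by split => //; move: x1; rewrite (degreeD1 x hLF) (negbTE xL).
Qed.

Definition admissible F X := (#|X| <= 1) || (X \in F).

Definition nbhds_admissible A F :=
  forall v, admissible F (in_nbhd A v) && admissible F (out_nbhd A v).

Definition edges_realized A F :=
  forall e, e \in F -> exists v, (e == in_nbhd A v) || (e == out_nbhd A v).

Definition arcs_within A W := forall u v, A u v -> (u \in W) && (v \in W).

Definition rank_increasing A r := forall u v, A u v -> r u < r v.

Definition realization F A r :=
  [/\ arcs_within A (cover F), rank_increasing A r,
      nbhds_admissible A F & edges_realized A F].

Definition source A x := in_nbhd A x == set0.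
Definition sink A x := out_nbhd A x == set0.
Definition terminal A x := source A x || sink A x.

Definition converse A : rel T := fun u v => A v u.

Definition nested_at A B v :=
  ((in_nbhd A v \subset in_nbhd B v) || (in_nbhd B v \subset in_nbhd A v)) &&
  ((out_nbhd A v \subset out_nbhd B v) || (out_nbhd B v \subset out_nbhd A v)).

Definition nested A B := forall v, nested_at A B v.

Lemma in_nbhd_relU A B v : in_nbhd (relU A B) v = in_nbhd A v :|: in_nbhd B v.
Proof. by apply/setP=> u; rewrite !inE. Qed.

Lemma out_nbhd_relU A B v : out_nbhd (relU A B) v = out_nbhd A v :|: out_nbhd B v.
Proof. by apply/setP=> u; rewrite !inE. Qed.

Lemma in_nbhd_converse A v : in_nbhd (converse A) v = out_nbhd A v.
Proof. by apply/setP=> u; rewrite !inE. Qed.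

Lemma out_nbhd_converse A v : out_nbhd (converse A) v = in_nbhd A v.
Proof. by apply/setP=> u; rewrite !inE. Qed.

Lemma source_converse A x : source (converse A) x = sink A x.
Proof. by rewrite /source in_nbhd_converse. Qed.

Lemma sink_converse A x : sink (converse A) x = source A x.
Proof. by rewrite /sink out_nbhd_converse. Qed.

Lemma sourceP A x : reflect (forall y, ~~ A y x) (source A x).
Proof.
apply: (iffP eqP) => [h y | h]; first by have := congr1 (fun X => y \in X) h; rewrite !inE => ->.
by apply/setP=> y; rewrite !inE (negbTE (h y)).
Qed.

Lemma arcs_within_nbhd0 A W v : arcs_within A W -> v \notin W ->
  in_nbhd A v = set0 /\ out_nbhd A v = set0.
Proof.
move=> hA hv; split; apply/setP=> u; rewrite !inE; apply/negP=> /hA/andP[hu hv'];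
  by rewrite ?hu ?hv' in hv.
Qed.

Lemma rank_increasing_acyclic A r : rank_increasing A r -> acyclic A.
Proof.
move=> hr [x [p [hp hl hne]]].
have rank_last y q : path A y q -> q != [::] -> r y < r (last y q).
  elim: q y => [//|z q IH] y /= /andP[hyz hq] _.
  case: q IH hq => [|z' q] IH hq; first exact: hr.
  exact: ltn_trans (hr _ _ hyz) (IH _ hq isT).
by have := rank_last x p hp hne; rewrite hl ltnn.
Qed.

Lemma rank_increasing_digraph A r : rank_increasing A r -> digraph A.
Proof.
move=> hr u v; apply/negP=> /andP[huv hvu].
by have := ltn_trans (hr _ _ huv) (hr _ _ hvu); rewrite ltnn.
Qed.

Lemma realization_niche_hypergraph F A r :
  (forall e, e \in F -> 2 <= #|e|) -> realization F A r -> niche_hypergraph A = F.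
Proof.
move=> hF [_ _ hadm hreal]; apply/setP=> e; rewrite inE.
apply/idP/idP => [/andP[he2 /existsP[v hv]] | he].
  case/andP: (hadm v); rewrite /admissible.
  by case/orP: hv => /eqP <-; rewrite (leqNgt #|e|) he2.
by rewrite (hF e he) /=; have [v hv] := hreal e he; apply/existsP; exists v.
Qed.

Lemma realization_source F A r x : realization F A r -> x \in cover F ->
  exists2 c, c \in cover F & source A c.
Proof.
move=> [hA hr _ _] hx; have [c hc hmin] := arg_minnP r hx; exists c => //.
apply/sourceP => y; apply/negP => hyc; have /andP[hy _] := hA _ _ hyc.
by have := hmin y hy; rewrite leqNgt hr.
Qed.

Lemma admissible_small F X : #|X| <= 1 -> admissible F X.
Proof. by rewrite /admissible => ->. Qed.

Lemma admissible0 F : admissible F set0.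
Proof. by rewrite admissible_small ?cards0. Qed.

Lemma admissible1 F c : admissible F [set c].
Proof. by rewrite admissible_small ?cards1. Qed.

Lemma admissible_edge F X : X \in F -> admissible F X.
Proof. by rewrite /admissible => ->; rewrite orbT. Qed.

Lemma admissible_setU F G X : admissible F X || admissible G X -> admissible (F :|: G) X.
Proof. by rewrite /admissible inE; case: (#|X| <= 1) => //= /orP[] ->; rewrite ?orbT. Qed.

Lemma admissible_nested F G X Y : admissible F X -> admissible G Y ->
  (X \subset Y) || (Y \subset X) -> admissible (F :|: G) (X :|: Y).
Proof.
move=> hX hY /orP[/setUidPr -> | /setUidPl ->]; apply: admissible_setU;
  by rewrite ?hX ?hY ?orbT.
Qed.

Lemma nbhds_admissible_relU A B F G : nested A B ->
  nbhds_admissible A F -> nbhds_admissible B G -> nbhds_admissible (relU A B) (F :|: G).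
Proof.
move=> hn hA hB v; rewrite in_nbhd_relU out_nbhd_relU.
case/andP: (hn v) => hin hout; case/andP: (hA v) => Ain Aout; case/andP: (hB v) => Bin Bout.
by rewrite !admissible_nested.
Qed.

Lemma edge_absorbs F X Y : simple_loopless F -> X \in F -> admissible F Y ->
  (X \subset Y) || (Y \subset X) -> X :|: Y = X.
Proof.
move=> [hF2 hsp] hX hY /orP[hXY | /setUidPl //].
case/orP: hY => hY; last by rewrite -(hsp _ _ hX hY hXY) setUid.
by have := leq_trans (hF2 _ hX) (leq_trans (subset_leq_card hXY) hY).
Qed.

Lemma edges_realized_relU A B F G : nested A B -> simple_loopless (F :|: G) ->
  nbhds_admissible A F -> nbhds_admissible B G ->
  edges_realized A F -> edges_realized B G -> edges_realized (relU A B) (F :|: G).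
Proof.
move=> hn hFG hA hB rA rB e.
have absorb (H : {set {set T}}) X Y : H \subset F :|: G -> X \in F :|: G -> admissible H Y ->
    (X \subset Y) || (Y \subset X) -> X :|: Y = X.
  move=> hH hX hY; apply: edge_absorbs hFG hX _.
  by case/orP: hY => hY; [exact: admissible_small | exact/admissible_edge/(subsetP hH)].
rewrite inE => /orP[] he; have heFG : e \in F :|: G by rewrite inE he ?orbT.
- have [v /orP[]/eqP hv] := rA e he; exists v; rewrite ?in_nbhd_relU ?out_nbhd_relU -hv.
  + rewrite (absorb G e) ?eqxx ?subsetUr ?(andP (hB v)).1 //.
    by rewrite hv (andP (hn v)).1.
  + rewrite (absorb G e) ?eqxx ?orbT ?subsetUr ?(andP (hB v)).2 //.
    by rewrite hv (andP (hn v)).2.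
- have [v /orP[]/eqP hv] := rB e he; exists v;
    rewrite ?in_nbhd_relU ?out_nbhd_relU -hv (setUC _ e).
  + rewrite (absorb F e) ?eqxx ?subsetUl ?(andP (hA v)).1 //.
    by rewrite hv orbC (andP (hn v)).1.
  + rewrite (absorb F e) ?eqxx ?orbT ?subsetUl ?(andP (hA v)).2 //.
    by rewrite hv orbC (andP (hn v)).2.
Qed.

Lemma nested_at_set0 A B v :
  in_nbhd A v = set0 \/ in_nbhd B v = set0 -> out_nbhd A v = set0 \/ out_nbhd B v = set0 ->
  nested_at A B v.
Proof. by rewrite /nested_at; do 2![case=> ->]; rewrite !sub0set ?orbT. Qed.

Lemma realization_converse F A r : realization F A r -> exists r', realization F (converse A) r'.
Proof.
case=> hA hr hadm hreal; exists (fun x => \max_y r y - r x); split.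
- by move=> u v /hA; rewrite andbC.
- move=> u v /hr huv; have := @leq_bigmax _ r u; have := @leq_bigmax _ r v; lia.
- by move=> v; rewrite in_nbhd_converse out_nbhd_converse andbC.
- by move=> e /hreal[v hv]; exists v; rewrite in_nbhd_converse out_nbhd_converse orbC.
Qed.

Lemma nbhd_relU_l A B G x : arcs_within B (cover G) -> x \notin cover G ->
  in_nbhd (relU A B) x = in_nbhd A x /\ out_nbhd (relU A B) x = out_nbhd A x.
Proof.
move=> hB hx; rewrite in_nbhd_relU out_nbhd_relU.
by have [-> ->] := arcs_within_nbhd0 hB hx; rewrite !setU0.
Qed.

(* Shifting [r1] by [r2 u] and [r2] by [r1 u] makes the two ranks agree at [u]. *)
Lemma realization_relU F G A B r1 r2 u :
  realization F A r1 -> realization G B r2 -> simple_loopless (F :|: G) ->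
  (forall v, v \in cover F -> v \in cover G -> v = u) ->
  (u \in cover F -> u \in cover G -> (source A u && sink B u) || (sink A u && source B u)) ->
  exists r, realization (F :|: G) (relU A B) r.
Proof.
case=> hA hr1 hadmA hrealA; case=> hB hr2 hadmB hrealB hFG hcap hu.
have hn : nested A B.
  move=> v; have [hvG | hvG] := boolP (v \in cover G); last first.
    by have [hi ho] := arcs_within_nbhd0 hB hvG; apply: nested_at_set0; right.
  have [hvF | hvF] := boolP (v \in cover F); last first.
    by have [hi ho] := arcs_within_nbhd0 hA hvF; apply: nested_at_set0; left.
  have ev := hcap v hvF hvG; subst v.
  by case/orP: (hu hvF hvG) => /andP[/eqP hi /eqP ho]; apply: nested_at_set0; auto.
pose r x := if x \in cover F then r1 x + r2 u else r2 x + r1 u.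
have rG x : x \in cover G -> r x = r2 x + r1 u.
  by rewrite /r => hxG; case: ifP => // hxF; rewrite (hcap x hxF hxG) addnC.
exists r; split.
- move=> x y; rewrite cover_setU !inE => /orP[/hA | /hB] /andP[-> ->]; by rewrite ?orbT.
- move=> x y /orP[hxy | hxy].
    by have /andP[hx hy] := hA _ _ hxy; rewrite /r hx hy ltn_add2r hr1.
  by have /andP[hx hy] := hB _ _ hxy; rewrite !rG // ltn_add2r hr2.
- exact: nbhds_admissible_relU.
- exact: edges_realized_relU.
Qed.

Definition in_star L c : rel T := fun a b => (a \in L) && (b == c).
Definition out_star c L : rel T := fun a b => (a == c) && (b \in L).

Lemma in_nbhd_in_star L c v : in_nbhd (in_star L c) v = if v == c then L else set0.
Proof. by apply/setP=> u; rewrite !inE /in_star; case: (v == c); rewrite ?andbT ?andbF ?inE. Qed.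

Lemma out_nbhd_in_star L c v : out_nbhd (in_star L c) v = if v \in L then [set c] else set0.
Proof. by apply/setP=> u; rewrite !inE /in_star; case: (v \in L); rewrite ?inE. Qed.

Lemma in_nbhd_out_star L c v : in_nbhd (out_star c L) v = if v \in L then [set c] else set0.
Proof. by apply/setP=> u; rewrite !inE /out_star; case: (v \in L); rewrite ?andbT ?andbF ?inE. Qed.

Lemma out_nbhd_out_star L c v : out_nbhd (out_star c L) v = if v == c then L else set0.
Proof. by apply/setP=> u; rewrite !inE /out_star; case: (v == c); rewrite ?inE. Qed.

Lemma in_star_admissible L c : nbhds_admissible (in_star L c) [set L].
Proof.
move=> v; rewrite in_nbhd_in_star out_nbhd_in_star.
by case: (v == c); case: (v \in L); rewrite ?admissible0 ?admissible1 ?admissible_edge ?set11.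
Qed.

Lemma in_star_realized L c : edges_realized (in_star L c) [set L].
Proof. by move=> e /set1P ->; exists c; rewrite in_nbhd_in_star !eqxx. Qed.

Lemma out_star_admissible L c : nbhds_admissible (out_star c L) [set L].
Proof.
move=> v; rewrite in_nbhd_out_star out_nbhd_out_star.
by case: (v == c); case: (v \in L); rewrite ?admissible0 ?admissible1 ?admissible_edge ?set11.
Qed.

Lemma out_star_realized L c : edges_realized (out_star c L) [set L].
Proof. by move=> e /set1P ->; exists c; rewrite out_nbhd_out_star !eqxx orbT. Qed.

(* Doubling the old ranks leaves room for the new vertices of [L] just below [c]. *)
Lemma realization_add_in_star F A r L c :
  realization F A r -> simple_loopless (F :|: [set L]) ->
  c \in cover F -> source A c -> c \notin L ->
  (forall x, x \in L -> x \in cover F -> sink A x && (r x < r c)) ->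
  realization (F :|: [set L]) (relU A (in_star L c))
    (fun x => if x \in cover F then (r x).*2.+1 else (r c).*2).
Proof.
case=> hA hr hadm hreal hFL hcF /eqP hc hcL hL.
have hn : nested A (in_star L c).
  move=> v; apply: nested_at_set0; rewrite ?in_nbhd_in_star ?out_nbhd_in_star.
    by have [-> | _] := eqVneq v c; [left | right].
  have [hvL | _] := boolP (v \in L); [left | by right].
  have [hvF | hvF] := boolP (v \in cover F); last exact: (arcs_within_nbhd0 hA hvF).2.
  by have /andP[/eqP -> _] := hL v hvL hvF.
split.
- move=> x y /orP[/hA/andP[hx hy] | /andP[hx /eqP ->]];
    by rewrite cover_setU cover1 !inE ?hx ?hy ?hcF ?orbT.
- move=> x y /orP[hxy | /andP[hx /eqP ->]].
    by have /andP[-> ->] := hA _ _ hxy; have := hr _ _ hxy; lia.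
  rewrite hcF; case: ifP => hxF; last lia.
  by have /andP[_] := hL x hx hxF; lia.
- exact: nbhds_admissible_relU hn hadm (in_star_admissible L c).
- exact: edges_realized_relU hn hFL hadm (in_star_admissible L c) hreal (in_star_realized c).
Qed.

Lemma nbhd_add_in_star_other A L c x : x \notin L -> x != c ->
  in_nbhd (relU A (in_star L c)) x = in_nbhd A x /\
  out_nbhd (relU A (in_star L c)) x = out_nbhd A x.
Proof.
move=> hxL hxc; rewrite in_nbhd_relU out_nbhd_relU in_nbhd_in_star out_nbhd_in_star.
by rewrite (negbTE hxL) (negbTE hxc) !setU0.
Qed.

Lemma add_in_star_keeps A F L k c x : L \in F -> k \in F :\ L -> x \in k ->
  degree F x = 1 -> c \notin k ->
  [/\ degree (F :\ L) x = 1, x \in cover (F :\ L),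
      in_nbhd (relU A (in_star L c)) x = in_nbhd A x &
      out_nbhd (relU A (in_star L c)) x = out_nbhd A x].
Proof.
move=> hLF kF' xk x1 ck; have [xL x1'] := degree1_setD1 hLF kF' xk x1.
have xc : x != c by apply: contraNneq ck => <-.
by have [-> ->] := nbhd_add_in_star_other A xL xc; split => //; exact: mem_cover kF' xk.
Qed.

Lemma nested_out_in_star a q h d : a \in d -> q \in h -> nested (out_star a h) (in_star d q).
Proof.
move=> ad qh v; rewrite /nested_at in_nbhd_out_star in_nbhd_in_star.
rewrite out_nbhd_out_star out_nbhd_in_star; apply/andP; split.
  by have [-> | _] := eqVneq v q; rewrite ?qh ?sub1set ?ad // sub0set orbT.
by have [-> | _] := eqVneq v a; rewrite ?ad ?sub1set ?qh ?orbT // sub0set.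
Qed.

Lemma out_in_star_realizes a q h d : a \in d -> q \in h -> simple_loopless [set h; d] ->
  nbhds_admissible (relU (out_star a h) (in_star d q)) [set h; d] /\
  edges_realized (relU (out_star a h) (in_star d q)) [set h; d].
Proof.
move=> ad qh hhd; have hn := nested_out_in_star ad qh.
have hA : nbhds_admissible (out_star a h) [set h] by exact: out_star_admissible.
have hB : nbhds_admissible (in_star d q) [set d] by exact: in_star_admissible.
split; first exact: nbhds_admissible_relU hn hA hB.
exact: edges_realized_relU hn hhd hA hB (out_star_realized a) (in_star_realized q).
Qed.

(* Two edges [h] and [d] are realized as the out-neighbourhood of [a \in d] and the
   in-neighbourhood of [q \in h]; the arc [a -> q] lies in both, which keeps the
   neighbourhoods of [a] and [q] equal to [h] and [d]. *)
Lemma realization_pair h d a q : simple_loopless [set h; d] ->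
  a \in d -> a \notin h -> q \in h -> q \notin d ->
  exists A r, realization [set h; d] A r /\
    forall x, x \in h :|: d -> x \notin h :&: d -> terminal A x.
Proof.
move=> hhd had hah hqh hqd; have [hadm hreal] := out_in_star_realizes had hqh hhd.
exists (relU (out_star a h) (in_star d q)),
  (fun x => if x == a then 0 else if x == q then 2 else 1).
split; first split.
- move=> x y /orP[/andP[/eqP-> hy] | /andP[hx /eqP->]];
    by rewrite cover_setU !cover1 !inE ?had ?hy ?hx ?hqh ?orbT.
- move=> x y /orP[/andP[/eqP-> hy] | /andP[hx /eqP->]].
    by rewrite eqxx (eq_mem_notinF hy hah); case: (y == q).
  by rewrite (eq_mem_notinF hqh hah) eqxx (eq_mem_notinF hx hqd); case: (x == a).
- exact: hadm.
- exact: hreal.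
- move=> x /setUP[] hx; rewrite in_setI hx ?andbT /= => hxn; rewrite /terminal /source /sink.
    rewrite out_nbhd_relU out_nbhd_out_star out_nbhd_in_star (eq_mem_notinF hx hah).
    by rewrite (negbTE hxn) setU0 eqxx orbT.
  rewrite in_nbhd_relU in_nbhd_out_star in_nbhd_in_star (negbTE hxn).
  by rewrite (eq_mem_notinF hx hqd) setU0 eqxx.
Qed.

Lemma nested_triple a h l d w1 w2 : a \notin h -> h :&: l = [set w1] -> h :&: d = [set w2] ->
  nested (relU (out_star a h) (in_star l w2)) (out_star w1 d).
Proof.
move=> hah hl hd v; have /andP[w1h w1l] := setI1_mem hl; have /andP[w2h w2d] := setI1_mem hd.
rewrite /nested_at in_nbhd_relU out_nbhd_relU in_nbhd_out_star in_nbhd_in_star.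
rewrite out_nbhd_out_star out_nbhd_in_star in_nbhd_out_star out_nbhd_out_star.
apply/andP; split.
  have [vd | _] := boolP (v \in d); last by rewrite sub0set orbT.
  have [-> | vw2] := eqVneq v w2; first by apply/orP; right; rewrite sub1set in_setU w1l orbT.
  by rewrite ifN ?set0U ?sub0set //; apply: contra vw2 => vh; rewrite (setI1_eq hd vh vd).
have [-> | _] := eqVneq v w1; last by rewrite sub0set orbT.
by rewrite (eq_mem_notinF w1h hah) w1l set0U sub1set w2d.
Qed.

(* Three edges: [h] is the out-neighbourhood of [a \in l], [l] the in-neighbourhood of
   [w2 \in h :&: d] and [d] the out-neighbourhood of [w1 \in h :&: l]; the extra vertex
   [b \in l] stays a source of rank above the free vertices of [h]. *)
Lemma realization_triple h l d a b w1 w2 : simple_loopless [set h; l; d] ->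
  h :&: l = [set w1] -> h :&: d = [set w2] -> [disjoint l & d] ->
  a \in l -> a \notin h -> b \in l -> b \notin h -> b != a ->
  exists A r, [/\ realization [set h; l; d] A r, source A b,
    forall x, x \in h -> x \notin l -> x \notin d -> sink A x && (r x < r b) &
    forall x, x \in d -> x \notin h -> sink A x].
Proof.
move=> hF hl hd dld hal hah hbl hbh hba.
have /andP[w1h w1l] := setI1_mem hl; have /andP[w2h w2d] := setI1_mem hd.
have notd x : x \in l -> x \notin d by move=> hx; rewrite (disjointFr dld hx).
have w2l : w2 \notin l by apply: contraL w2d => /notd.
have [admU realU] :=
  out_in_star_realizes hal w2h (simple_loopless_subset (subsetUl _ [set d]) hF).
pose U := relU (out_star a h) (in_star l w2).
have hn2 : nested U (out_star w1 d) := nested_triple hah hl hd.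
exists (relU U (out_star w1 d)),
  (fun x => if x == a then 0 else if x == w2 then 3 else if x \in h then 1 else 2).
split; first split.
- move=> x y; rewrite /U !cover_setU !cover1 !inE.
  by move=> /orP[/orP[/andP[/eqP-> ->] | /andP[-> /eqP->]] | /andP[/eqP-> ->]];
    rewrite ?hal ?w2h ?w1h ?orbT.
- move=> x y; rewrite /U /relU /out_star /in_star /=.
  move=> /orP[/orP[/andP[/eqP-> hy] | /andP[hx /eqP->]] | /andP[/eqP-> hy]].
  + by rewrite eqxx (eq_mem_notinF hy hah); case: (y == w2); rewrite ?hy.
  + rewrite (eq_mem_notinF w2h hah) eqxx (eq_mem_notinF hx w2l).
    by case: (x == a) => //; case: (x \in h).
  + rewrite (eq_mem_notinF w1h hah) (eq_mem_notinF w1l w2l) w1h (eq_mem_notinF hy (notd _ hal)).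
    have [// | yw2] := eqVneq y w2.
    by rewrite ifN //; apply: contra yw2 => yh; rewrite (setI1_eq hd yh hy).
- exact: nbhds_admissible_relU hn2 admU (out_star_admissible d w1).
- exact: edges_realized_relU hn2 hF admU (out_star_admissible d w1) realU (out_star_realized w1).
- rewrite /source /U !in_nbhd_relU in_nbhd_out_star in_nbhd_in_star in_nbhd_out_star.
  by rewrite (negbTE hbh) (negbTE (notd _ hbl)) (eq_mem_notinF hbl w2l) !setU0.
- move=> x xh xl xd; rewrite /sink /U !out_nbhd_relU out_nbhd_out_star out_nbhd_in_star.
  rewrite out_nbhd_out_star (eq_mem_notinF xh hah) (negbTE xl) (eq_notin_memF w1l xl) !setU0 eqxx.
  by rewrite (eq_notin_memF w2d xd) xh (negbTE hba) (eq_mem_notinF hbl w2l) (negbTE hbh).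
- move=> x xd xh; rewrite /sink /U !out_nbhd_relU out_nbhd_out_star out_nbhd_in_star.
  rewrite out_nbhd_out_star (eq_mem_notinF xd (notd _ hal)) (disjointFl dld xd).
  by rewrite (eq_notin_memF w1h xh) !setU0.
Qed.

End Realization.

Section LinearHypertree.
Variable T : finType.
Variable E : {set {set T}}.
Hypothesis E_simple : simple_loopless E.
Hypothesis E_ge3 : forall e, e \in E -> 3 <= #|e|.
Hypothesis E_deg2 : forall v, degree E v <= 2.
Implicit Types (A : rel T) (F G : {set {set T}}) (X Y L e f h d : {set T}) (r : T -> nat).

Lemma degree_le2 F x : F \subset E -> degree F x <= 2.
Proof. by move=> hF; apply: leq_trans (degree_subset x hF) (E_deg2 x). Qed.

Lemma edge_through_deg2 F e f k x : F \subset E -> e \in F -> f \in F -> k \in F -> e != f ->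
  x \in e -> x \in f -> x \in k -> k = e \/ k = f.
Proof.
move=> hF he hf hk hef hxe hxf hxk.
have [-> | hke] := eqVneq k e; first by left.
have [-> | hkf] := eqVneq k f; first by right.
have : #|k |: [set e; f]| <= degree F x.
  apply: subset_leq_card; apply/subsetP => Y.
  by rewrite !inE => /or3P[]/eqP->; rewrite ?he ?hf ?hk ?hxe ?hxf ?hxk.
by rewrite cardsU1 cards2 hef !inE negb_or hke hkf; have := degree_le2 x hF; lia.
Qed.

Lemma other_vertex X w : X \in E -> exists2 a, a \in X & a != w.
Proof.
move=> /E_ge3 /(card_setD1_gt1 w) /ltnW /card_gt0P[a].
by rewrite in_setD1 => /andP[aw aX]; exists a.
Qed.

Definition pendant F h f := [/\ f \in F, f != h, exists w, f :&: h = [set w] &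
  forall x, x \in f -> x \notin h -> degree F x = 1].

Definition star F h := h \in F /\ forall f, f \in F -> f != h -> pendant F h f.

Definition terminal_on F A X := forall x, x \in X -> degree F x = 1 -> terminal A x.

Lemma terminal_on_subset F A X Y : X \subset Y -> terminal_on F A Y -> terminal_on F A X.
Proof. by move=> /subsetP hXY hY x /hXY; apply: hY. Qed.

Lemma terminal_on_setU F A X Y :
  terminal_on F A X -> terminal_on F A Y -> terminal_on F A (X :|: Y).
Proof. by move=> hX hY x /setUP[]; [apply: hX | apply: hY]. Qed.

Lemma star_pair F h d : F \subset E -> F = [set h; d] -> h != d -> pendant F h d ->
  exists A r, realization F A r /\ terminal_on F A (h :|: d).
Proof.
move=> hF eF hhd [hdF _ [w hw] _].
have hhF : h \in F by rewrite eF !inE eqxx.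
have /andP[wd wh] := setI1_mem hw.
have [a ad aw] := other_vertex w (subsetP hF _ hdF).
have [q qh qw] := other_vertex w (subsetP hF _ hhF).
have ah : a \notin h by apply: contra aw => ah; rewrite (setI1_eq hw ad ah).
have qd : q \notin d by apply: contra qw => qd; rewrite (setI1_eq hw qd qh).
have hsimple : simple_loopless [set h; d].
  by rewrite -eF; exact: simple_loopless_subset hF E_simple.
have [A [r [hA hterm]]] := realization_pair hsimple ad ah qh qd.
exists A, r; split; first by rewrite eF.
move=> x hx hx1; apply: hterm => //.
by apply/setIP => -[xh xd]; have := degree_ge2 hhF hdF hhd xh xd; rewrite hx1.
Qed.

(* [c] is the centre for the next pendant edge. *)
Definition star_realization F h d A r c :=
  [/\ realization F A r, c \in cover F :\: (h :|: d), source A c,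
      forall x, x \in h -> degree F x = 1 -> sink A x && (r x < r c) &
      terminal_on F A d].

Lemma star_triple F h l d : F \subset E -> F = [set h; l; d] ->
  h != l -> h != d -> l != d -> pendant F h l -> pendant F h d ->
  exists A r c, star_realization F h d A r c.
Proof.
move=> hF eF hhl hhd hld [hlF _ [w1 hw1] hl1] [hdF _ [w2 hw2] _].
have hhF : h \in F by rewrite eF !inE eqxx.
have dld : [disjoint l & d].
  apply/negPn/negP => /not_disjointP[x xl xd].
  have [xh | xh] := boolP (x \in h).
    by case: (edge_through_deg2 hF hhF hlF hdF hhl xh xl xd) => ed; rewrite ed eqxx in hhd hld.
  by move: hld; rewrite (degree1_edge_eq (hl1 x xl xh) hlF hdF xl xd) eqxx.
have /(card_setD1_gt1 w1)/card_gt1P[a [b [al bl ab]]] := E_ge3 (subsetP hF _ hlF).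
move: al bl; rewrite !in_setD1 => /andP[aw1 al] /andP[bw1 bl].
have ah : a \notin h by apply: contra aw1 => ah; rewrite (setI1_eq hw1 al ah).
have bh : b \notin h by apply: contra bw1 => bh; rewrite (setI1_eq hw1 bl bh).
have hsimple : simple_loopless [set h; l; d].
  by rewrite -eF; exact: simple_loopless_subset hF E_simple.
rewrite setIC in hw1; rewrite setIC in hw2.
have ba : b != a by rewrite eq_sym.
have [A [r [hA bsrc hsink dsink]]] := realization_triple hsimple hw1 hw2 dld al ah bl bh ba.
have deg1 x k : k \in F -> x \in k -> degree F x = 1 -> k != h -> x \notin h.
  by move=> hk xk hx1 kh; apply: contra kh => xh; rewrite (degree1_edge_eq hx1 hk hhF xk xh).
exists A, r, b; rewrite eF; split => //.
- by rewrite !cover_setU !cover1 in_setD !in_setU bl (disjointFr dld bl) (negbTE bh) orbT.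
- move=> x xh hx1; apply: hsink => //.
    by apply: contraL xh => xl; rewrite -eF in hx1; apply: deg1 hlF xl hx1 _; rewrite eq_sym.
  by apply: contraL xh => xd; rewrite -eF in hx1; apply: deg1 hdF xd hx1 _; rewrite eq_sym.
- move=> x xd hx1; rewrite -eF in hx1.
  by rewrite /terminal dsink ?orbT //; apply: deg1 hdF xd hx1 _; rewrite eq_sym.
Qed.

Lemma star_setD1 F h L : star F h -> L != h -> star (F :\ L) h.
Proof.
move=> [hhF hpend] hLh; split; first by rewrite in_setD1 eq_sym hLh.
move=> f /setD1P[fL fF] fh; have [_ _ hw hf1] := hpend f fF fh.
have fF' : f \in F :\ L by rewrite in_setD1 fL.
split=> // x xf xh; exact: degree_eq1_subset (subsetDl F [set L]) fF' xf (hf1 x xf xh).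
Qed.

(* A further pendant edge [L] becomes the in-neighbourhood of the source [c]; any other
   vertex of [L] is a fresh source for the next one. *)
Lemma star_realization_add F h d L A r c : F \subset E -> h \in F -> d \in F -> L != d ->
  pendant F h L -> star_realization (F :\ L) h d A r c ->
  exists A' r' c', star_realization F h d A' r' c'.
Proof.
move=> hF hhF hdF hLd [hLF hLh [w hw] hL1] [hsol hc csrc hinv dterm].
set F' := F :\ L.
have eF : F' :|: [set L] = F by rewrite setUC setD1K.
have hdeg x : degree F x = (x \in L) + degree F' x := degreeD1 x hLF.
have /andP[wL wh] := setI1_mem hw.
have hhF' : h \in F' by rewrite in_setD1 eq_sym hLh.
have Lcover x : x \in L -> x \in cover F' -> x = w := pendant_meets_rest hLF hw hL1.
move: hc; rewrite in_setD in_setU negb_or => /andP[/andP[ch cd] cF].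
have cL : c \notin L by apply: contra ch => cL; rewrite (Lcover c cL cF).
have w1 : degree F' w = 1.
  apply/eqP; rewrite eqn_leq (degree_gt0 hhF' wh) andbT -ltnS -add1n.
  by have := degree_le2 w hF; rewrite hdeg wL.
have Lsink x : x \in L -> x \in cover F' -> sink A x && (r x < r c).
  by move=> xL xF; rewrite (Lcover x xL xF); exact: hinv w wh w1.
have hsimple : simple_loopless (F' :|: [set L]).
  by rewrite eF; exact: simple_loopless_subset hF E_simple.
have hsol' := realization_add_in_star hsol hsimple cF csrc cL Lsink.
have [p pL pw] := other_vertex w (subsetP hF _ hLF).
have ph : p \notin h by apply: contra pw => ph; rewrite (setI1_eq hw pL ph).
have pF : p \notin cover F' by apply: contra pw => pF; rewrite (Lcover p pL pF).
have pd : p \notin d.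
  by apply: contra hLd => pd; rewrite (degree1_edge_eq (hL1 p pL ph) hLF hdF pL pd).
have hdF' : d \in F' by rewrite in_setD1 eq_sym hLd.
have [hA _ _ _] := hsol.
exists (relU A (in_star L c)), (fun x => if x \in cover F' then (r x).*2.+1 else (r c).*2), p.
split; first by rewrite -eF.
- by rewrite in_setD in_setU negb_or ph pd (mem_cover hLF pL).
- rewrite /source in_nbhd_relU (arcs_within_nbhd0 hA pF).1 in_nbhd_in_star.
  by rewrite (eq_notin_memF cF pF) setU0.
- move=> x xh x1; have [x1' xF _ ho] := add_in_star_keeps A hLF hhF' xh x1 ch.
  have /andP[xs xc] := hinv x xh x1'.
  by rewrite /sink ho -/(sink A x) xs xF (negbTE pF) -doubleS leq_double.
- move=> x xd x1; have [x1' _ hi ho] := add_in_star_keeps A hLF hdF' xd x1 cd.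
  by rewrite /terminal /source /sink hi ho; exact: dterm x xd x1'.
Qed.

Lemma third_edge F h d : 2 < #|F| -> exists2 L, L \in F & (L != h) && (L != d).
Proof.
move=> hF; have /subsetPn[L hLF hL] : ~~ (F \subset [set h; d]).
  apply: contraTN hF => /subset_leq_card hle; rewrite -leqNgt (leq_trans hle) //.
  by rewrite cards2; case: (h != d).
by exists L; rewrite // !inE negb_or in hL.
Qed.

Lemma star_realization_exists n F h d : #|F| = n.+3 -> F \subset E -> star F h ->
  d \in F -> d != h -> exists A r c, star_realization F h d A r c.
Proof.
elim: n F => [|n IH] F hF3 hF hst hdF hdh; have [hhF hpend] := hst;
  (have [L hLF /andP[hLh hLd]] : exists2 L, L \in F & (L != h) && (L != d)
    by apply: third_edge; rewrite hF3).
  have eF : F = [set h; L; d].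
    apply/eqP; rewrite eq_sym eqEcard hF3 setUC cardsU1 cards2 !inE negb_or.
    rewrite hdh (eq_sym d) hLd (eq_sym h) hLh; apply/andP; split => //; apply/subsetP => X.
    by rewrite !inE => /or3P[]/eqP->.
  apply: star_triple hF eF _ _ _ (hpend L hLF hLh) (hpend d hdF hdh); by rewrite // eq_sym.
have hF' : #|F :\ L| = n.+3 by move: hF3; rewrite (cardsD1 L) hLF => -[].
have hdF' : d \in F :\ L by rewrite in_setD1 eq_sym hLd.
have [A [r [c hAc]]] := IH _ hF' (subset_trans (subsetDl _ _) hF) (star_setD1 hst hLh) hdF' hdh.
exact: star_realization_add hF hhF hdF hLd (hpend L hLF hLh) hAc.
Qed.

Lemma star_realizable F h d : F \subset E -> star F h -> d \in F -> d != h ->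
  exists A r, realization F A r /\ terminal_on F A (h :|: d).
Proof.
move=> hF hst hdF hdh; have [hhF hpend] := hst.
have [hF3 | hF2] := ltnP 2 #|F|.
  have hn : #|F| = (#|F| - 3).+3 by rewrite -addn3 subnK.
  have [A [r [c [hA _ _ hinv dterm]]]] := star_realization_exists hn hF hst hdF hdh.
  exists A, r; split => // x /setUP[] hx hx1; last exact: dterm.
  by have /andP[xs _] := hinv x hx hx1; rewrite /terminal xs orbT.
have eF : F = [set h; d].
  apply/eqP; rewrite eq_sym eqEcard cards2 eq_sym hdh (leq_trans hF2) // andbT.
  by apply/subsetP => X; rewrite !inE => /orP[]/eqP->.
by apply: star_pair hF eF _ (hpend d hdF hdh); rewrite eq_sym.
Qed.

Hypothesis E_linear : linear_hg E.
Variable g : rel T.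
Hypothesis g_sym : symmetric g.
Hypothesis g_irr : irreflexive g.
Hypothesis g_acyclic : ~ (exists c : seq T, [/\ cycle g c, uniq c & 3 <= size c]).
Hypothesis E_subtree : forall e, e \in E -> induced_connected g e.

Lemma linear_common_vertex e f v v' : e \in E -> f \in E -> e != f ->
  v \in e -> v \in f -> v' \in e -> v' \in f -> v = v'.
Proof.
move=> he hf hef hve hvf hv'e hv'f; apply/eqP; apply: contraTT (E_linear he hf hef) => hvv.
rewrite -ltnNge; apply: leq_trans (subset_leq_card (_ : [set v; v'] \subset _)).
  by rewrite cards2 hvv.
by apply/subsetP => z; rewrite !inE => /orP[]/eqP->; apply/andP.
Qed.

Definition tree_minus v v' : rel T := fun a b =>
  g a b && ~~ ((a == v) && (b == v')) && ~~ ((a == v') && (b == v)).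

Lemma tree_minus_sym v v' : symmetric (tree_minus v v').
Proof.
move=> a b; rewrite /tree_minus g_sym.
by case: (a == v); case: (b == v'); case: (a == v'); case: (b == v); rewrite ?andbF ?andbT.
Qed.

(* A path joining [v] and [v'] without the tree edge would close a cycle of [g]. *)
Lemma tree_minus_disconnects v v' : g v v' -> ~~ connect (tree_minus v v') v v'.
Proof.
move=> hg; apply/negP => /connectP[p hp hl].
case: (shortenP hp) hl => q hq huq _ hl.
have hvv : v != v' by apply: contraTneq hg => <-; rewrite g_irr.
case: q hq huq hl => [|y q] hq huq /= hl; first by rewrite hl eqxx in hvv.
case: q hq huq hl => [|z q] hq huq /= hl.
  by move: hq => /= /andP[]; rewrite /tree_minus -hl !eqxx /= andbF.
apply: g_acyclic; exists [:: v, y, z & q]; split => //.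
rewrite /cycle rcons_path; apply/andP; split; last by rewrite /= -hl g_sym.
by apply: sub_path hq => a b /andP[/andP[]].
Qed.

Lemma subtree_cut_side v v' Z a b : g v v' -> Z \in E -> ~~ ((v \in Z) && (v' \in Z)) ->
  a \in Z -> b \in Z -> connect (tree_minus v v') v a -> connect (tree_minus v v') v b.
Proof.
move=> hg hZ hvZ ha hb hPa; apply: contraNT hvZ => hPb.
have [p hp hl] := connectP (E_subtree hZ ha hb); rewrite hl in hPb.
have [y [z [/andP[/andP[hyz hy] hz] hPy hPz]]] := path_crossing hp hPa hPb.
have : ~~ tree_minus v v' y z.
  by apply: contra hPz => hm; exact: connect_trans hPy (connect1 hm).
rewrite /tree_minus hyz /= negb_and !negbK => /orP[]/andP[/eqP ey /eqP ez];
  by rewrite -ey -ez ?hy ?hz.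
Qed.

(* [v'] is the first step of the tree path from [v] to [x] inside [e]. *)
Lemma subtree_first_edge e v x : e \in E -> v \in e -> x \in e -> x != v ->
  exists v', [/\ g v v', v' \in e & ~~ connect (tree_minus v v') v x].
Proof.
move=> he hve hxe hxv; have [p hp hl] := connectP (E_subtree he hve hxe).
case: (shortenP hp) hl => q hq huq _ hl.
case: q hq huq hl => [|v' q] hq huq hl; first by rewrite hl eqxx in hxv.
move: hq => /= /andP[/andP[/andP[hvv' _] hv'e] hq]; exists v'; split => //.
have hv'x : connect (tree_minus v v') v' x.
  apply/connectP; exists q => //; apply: (sub_in_path (P := predC1 v)) hq.
    move=> a b; rewrite !inE => hav hbv /andP[/andP[hab _] _].
    by rewrite /tree_minus hab (negbTE hav) /= (negbTE hbv) andbF.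
  by apply/allP => z hz /=; apply: contraNneq (proj1 (andP huq)) => <-.
apply: contraTN (tree_minus_disconnects hvv') => hvx; rewrite negbK.
by apply: connect_trans hvx _; rewrite (sym_connect_sym (@tree_minus_sym v v')).
Qed.

Definition meets F : rel {set T} :=
  fun a b => [&& a \in F, b \in F, a != b & ~~ [disjoint a & b]].

Definition edges_connected F := forall a b, a \in F -> b \in F -> connect (meets F) a b.

Definition component F Z := [set W in F | connect (meets F) Z W].

Lemma meets_sym F : symmetric (meets F).
Proof.
by move=> a b; rewrite /meets disjoint_sym eq_sym; case: (a \in F); case: (b \in F); rewrite ?andbF.
Qed.

Lemma component_subset F Z : component F Z \subset F.
Proof. by apply/subsetP => W; rewrite inE => /andP[]. Qed.

Lemma component_self F Z : Z \in F -> Z \in component F Z.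
Proof. by rewrite inE connect0 andbT. Qed.

Lemma component_closed F Z Y W : Y \in component F Z -> W \in F -> ~~ [disjoint Y & W] ->
  W \in component F Z.
Proof.
move=> hY hW hYW; have [<- // | neYW] := eqVneq Y W.
move: hY; rewrite !inE hW => /andP[hYF hZY] /=.
by apply: connect_trans hZY (connect1 _); rewrite /meets hYF hW neYW.
Qed.

Lemma component_connected F Z : Z \in F -> edges_connected (component F Z).
Proof.
move=> hZ; set C := component F Z.
have ZC W : connect (meets F) Z W -> connect (meets C) Z W.
  apply: (connect_restrict (P := fun W => W \in C)); last exact: component_self.
  move=> y z hy /and4P[_ hz hyz hdis]; have hzC := component_closed hy hz hdis.
  by split => //; rewrite /meets hy hzC hyz hdis.
move=> Y W; rewrite !inE => /andP[_ /ZC hY] /andP[_ /ZC hW].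
by apply: connect_trans _ hW; rewrite (sym_connect_sym (@meets_sym C)).
Qed.

Lemma component_cover_disjoint F Z x :
  x \in cover (component F Z) -> x \notin cover (F :\: component F Z).
Proof.
move=> /bigcupP[Y hY xY]; apply/negP => /bigcupP[W /setDP[hW hWC] xW].
by move: hWC; rewrite (component_closed hY hW) //; apply/not_disjointP; exists x.
Qed.

Definition branch F e f := component (F :\ e) f.

Section Branch.
Variables (F : {set {set T}}) (e f : {set T}) (u : T).
Hypotheses (hF : F \subset E) (he : e \in F) (hf : f \in F) (hef : e != f)
  (hue : u \in e) (huf : u \in f).
Local Notation S := (branch F e f).

Lemma branch_sub : S \subset F :\ e.
Proof. exact: component_subset. Qed.

Lemma branch_subset : S \subset F.
Proof. exact: subset_trans branch_sub (subsetDl _ _). Qed.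

Lemma branch_f : f \in S.
Proof. by apply: component_self; rewrite in_setD1 eq_sym hef. Qed.

Lemma rest_e : e \in F :\: S.
Proof. by rewrite in_setD he andbT; apply/negP => /(subsetP branch_sub); rewrite !inE eqxx. Qed.

Lemma branch_closed Y Z : Y \in S -> Z \in F -> Z != e -> ~~ [disjoint Y & Z] -> Z \in S.
Proof. by move=> hY hZ hZe; apply: component_closed hY _; rewrite in_setD1 hZe. Qed.

(* Otherwise the subtree [e] leaves [u] through a tree edge [u v'] that no edge of the
   branch can cross back. *)
Lemma branch_meets_at Y x : Y \in S -> x \in Y -> x \in e -> x = u.
Proof.
move=> hY hxY hxe; have [// | hxu] := eqVneq x u; exfalso.
have heE := subsetP hF _ he; have hfE := subsetP hF _ hf.
have [v' [huv' hv'e hnx]] := subtree_first_edge heE hue hxe hxu.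
pose P := connect (tree_minus u v') u.
have notboth W : W \in F :\ e -> ~~ ((u \in W) && (v' \in W)).
  move=> /setD1P[We WF]; apply/andP => -[huW hv'W].
  have [eWe | eWf] := edge_through_deg2 hF he hf WF hef hue huf huW.
    by rewrite eWe eqxx in We.
  rewrite eWf in hv'W; have euv := linear_common_vertex heE hfE hef hue huf hv'e hv'W.
  by rewrite -euv g_irr in huv'.
pose Q := [pred W : {set T} | [forall b in W, P b]].
have Qstep W W1 : meets (F :\ e) W W1 -> Q W -> Q W1.
  move=> /and4P[hW hW1 _ /not_disjointP[y yW yW1]] /forall_inP QW; apply/forall_inP => b hb.
  have hW1E := subsetP hF _ (subsetP (subsetDl F _) _ hW1).
  exact: subtree_cut_side huv' hW1E (notboth _ hW1) yW1 hb (QW y yW).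
have Qclosed : closed (meets (F :\ e)) Q.
  by move=> W W1 hWW1; apply/idP/idP; apply: Qstep; rewrite // meets_sym.
have Qf : f \in Q.
  apply/forall_inP => b hb; apply: subtree_cut_side huv' hfE _ huf hb (connect0 _ u).
  by apply: notboth; rewrite in_setD1 eq_sym hef.
have QY : Y \in Q.
  by move: hY; rewrite inE => /andP[_ hfY]; rewrite -(closed_connect Qclosed hfY).
by have := forall_inP QY x hxY; rewrite /P (negbTE hnx).
Qed.

Lemma branch_cover_cap x : x \in cover S -> x \in cover (F :\: S) -> x = u.
Proof.
move=> /bigcupP[Y hY xY] /bigcupP[Z /setDP[hZF hZS] xZ].
have [eZ | hZe] := eqVneq Z e; first by rewrite eZ in xZ; exact: branch_meets_at hY xY xZ.
by move: hZS; rewrite (branch_closed hY hZF hZe) //; apply/not_disjointP; exists x.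
Qed.

Lemma branch_degree : degree S u = 1.
Proof.
apply/eqP; rewrite eqn_leq (degree_gt0 branch_f huf) andbT.
apply: (degree_le1 (X := f)) => Z hZ huZ; have /setD1P[hZe hZF] := subsetP branch_sub Z hZ.
by case: (edge_through_deg2 hF he hf hZF hef hue huf huZ) => // eZ; rewrite eZ eqxx in hZe.
Qed.

Lemma rest_degree : degree (F :\: S) u = 1.
Proof.
apply/eqP; rewrite eqn_leq (degree_gt0 rest_e hue) andbT.
apply: (degree_le1 (X := e)) => Z /setDP[hZF hZS] huZ.
by case: (edge_through_deg2 hF he hf hZF hef hue huf huZ) => // eZ; rewrite eZ branch_f in hZS.
Qed.

Lemma branch_card : #|S| < #|F|.
Proof.
apply/proper_card/properP; split; first exact: branch_subset.
by exists e; [exact: he | exact: (setDP rest_e).2].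
Qed.

Lemma rest_card : #|F :\: S| < #|F|.
Proof.
apply/proper_card/properP; split; first exact: subsetDl.
by exists f => //; rewrite in_setD branch_f.
Qed.

Lemma branch_connected : edges_connected S.
Proof. by apply: component_connected; rewrite in_setD1 eq_sym hef. Qed.

(* Collapsing the branch onto [e] maps meeting paths of [F] to meeting paths of the rest. *)
Lemma rest_connected : edges_connected F -> edges_connected (F :\: S).
Proof.
move=> hconn Y Z /setDP[hYF hYS] /setDP[hZF hZS].
pose pi W := if W \in S then e else W.
rewrite -[Y]/(if false then e else Y) -(negbTE hYS) -[Z]/(if false then e else Z) -(negbTE hZS).
apply: (connect_image (r := meets F) (pi := pi)); last exact: hconn.
move=> y z /and4P[hy hz hyz hdis]; rewrite /pi.
have [hyS | hyS] := boolP (y \in S); have [hzS | hzS] := boolP (z \in S); [by left | | | ].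
- left; have [// | hze] := eqVneq z e.
  by move: hzS; rewrite (branch_closed hyS hz hze hdis).
- left; have [// | hye] := eqVneq y e.
  by move: hyS; rewrite (branch_closed hzS hy hye) // disjoint_sym.
- by right; rewrite /meets !in_setD hyS hzS hy hz hyz hdis.
Qed.

(* The branch and the rest share only [u], of degree one in both; reversing the branch if
   necessary makes [u] a source of one side and a sink of the other. *)
Lemma branch_glue A1 r1 A2 r2 :
  realization (F :\: S) A1 r1 -> terminal_on (F :\: S) A1 e ->
  realization S A2 r2 -> terminal_on S A2 f ->
  exists A r, realization F A r /\
    forall k, k \in F :\: S -> terminal_on (F :\: S) A1 k -> terminal_on F A k.
Proof.
move=> hR tR hS tS.
have t1 := tR u hue rest_degree; have t2 := tS u huf branch_degree.
have [A2' [r2' [hS' hu]]] : exists A2' r2', realization S A2' r2' /\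
    ((source A1 u && sink A2' u) || (sink A1 u && source A2' u)).
  have [hu | hu] := boolP ((source A1 u && sink A2 u) || (sink A1 u && source A2 u)).
    by exists A2, r2.
  have [r' hr'] := realization_converse hS; exists (converse A2), r'; split => //.
  rewrite source_converse sink_converse; move: t1 t2 hu; rewrite /terminal.
  by case: (source A1 u); case: (sink A1 u); case: (source A2 u); case: (sink A2 u).
have eF := setDUK_subset branch_subset.
have hsimple : simple_loopless ((F :\: S) :|: S).
  by rewrite eF; exact: simple_loopless_subset hF E_simple.
have hcap x : x \in cover (F :\: S) -> x \in cover S -> x = u.
  by move=> xR xS; exact: branch_cover_cap xS xR.
have [r hr] := realization_relU hR hS' hsimple hcap (fun _ _ => hu).
exists (relU A1 A2'), r; split; first by rewrite -eF.
move=> k hk tk x xk x1; have xR := mem_cover hk xk.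
have xS : x \notin cover S.
  apply: contra (negbT (ltn_eqF (degree_ge2 he hf hef hue huf))) => xS.
  by rewrite -(branch_cover_cap xS xR) x1.
have [hS'A _ _ _] := hS'; have [hi ho] := nbhd_relU_l A1 hS'A xS.
rewrite /terminal /source /sink hi ho; apply: tk => //.
exact: degree_eq1_subset (subsetDl F S) hk xk x1.
Qed.

End Branch.

Lemma branch_cover F h Y : edges_connected F -> h \in F -> Y \in F -> Y != h ->
  exists f u, [/\ f \in F, f != h, u \in h, u \in f & Y \in branch F h f].
Proof.
move=> hconn hh hY hYh.
pose B W := (W == h) || [exists f in F, [&& f != h, ~~ [disjoint h & f] & W \in branch F h f]].
have : B Y.
  apply: (connect_preserved (r := meets F)) (hconn h Y hh hY); last by rewrite /B eqxx.
  move=> W W1 hBW /and4P[hW hW1 hWW1 hdis]; rewrite /B.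
  have [// | hW1h] := eqVneq W1 h; apply/exists_inP.
  case/orP: hBW => [/eqP eWh | /exists_inP[f hf /and3P[hfh hhf hWf]]].
    exists W1 => //; apply/and3P; split => //; last by apply: component_self; rewrite in_setD1 hW1h.
    by rewrite -eWh.
  by exists f => //; rewrite hfh hhf (branch_closed hWf hW1 hW1h hdis).
rewrite /B (negbTE hYh) => /exists_inP[f hf /and3P[hfh /not_disjointP[u uh uf] hYf]].
by exists f, u.
Qed.

Lemma star_of_thin_branches F h : F \subset E -> edges_connected F -> h \in F ->
  (forall f u, f \in F -> f != h -> u \in h -> u \in f -> #|branch F h f| <= 1) -> star F h.
Proof.
move=> hF hconn hh hthin; split => // Y hY hYh.
have [f [u [hf hfh uh uf hYf]]] := branch_cover hconn hh hY hYh.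
have hhf : h != f by rewrite eq_sym.
have eS : branch F h f = [set f].
  apply/eqP; rewrite eq_sym eqEcard sub1set (branch_f hf hhf) cards1; exact: hthin hf hfh uh uf.
move: hYf; rewrite eS => /set1P ->; split => //.
  exists u; apply/setP => x; rewrite !inE; apply/andP/eqP => [[xf xh] | ->//].
  exact: (branch_meets_at hF hh hf hhf uh uf (branch_f hf hhf) xf xh).
move=> x xf xh; apply/eqP; rewrite eqn_leq (degree_gt0 hf xf) andbT.
apply: (degree_le1 (X := f)) => Z hZ xZ; have hZh : Z != h by apply: contraNneq xh => <-.
apply/set1P; rewrite -eS; apply: branch_closed (branch_f hf hhf) hZ hZh _.
by apply/not_disjointP; exists x.
Qed.

Lemma branch_isolated F h e : (forall W, ~~ meets (F :\ h) e W) -> #|branch F h e| <= 1.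
Proof.
move=> hiso; rewrite -(cards1 e); apply/subset_leq_card/subsetP => Z.
rewrite inE => /andP[_ /connectP[[|W s] /= hp ->]]; first by rewrite inE.
by case/andP: hp => hW; rewrite (negbTE (hiso W)) in hW.
Qed.

Definition realizable_on F X := exists A r, realization F A r /\ terminal_on F A X.

Definition pendant_realizable F :=
  forall h e, h \in F -> pendant F h e -> realizable_on F (e :|: h).

Definition edge_realizable F := forall e, e \in F -> realizable_on F e.

Section Recursion.
Variable F : {set {set T}}.
Hypotheses (hF : F \subset E) (hconn : edges_connected F) (hF2 : 1 < #|F|).
Hypothesis IH : forall G, #|G| < #|F| -> G \subset E -> edges_connected G -> 1 < #|G| ->
  pendant_realizable G /\ edge_realizable G.

Lemma realizable_split h f u k : h \in F -> f \in F -> h != f -> u \in h -> u \in f ->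
  1 < #|branch F h f| -> k \in F :\: branch F h f ->
  realizable_on (F :\: branch F h f) (k :|: h) -> realizable_on F (k :|: h).
Proof.
move=> hh hf hhf uh uf hS hk [A1 [r1 [hR tR]]].
have hSE := subset_trans (@branch_subset F h f) hF.
have [_ eS] := IH (branch_card f hh) hSE (branch_connected hf hhf) hS.
have [A2 [r2 [hS2 tS]]] := eS f (branch_f hf hhf).
have tRh := terminal_on_subset (subsetUr k h) tR.
have [A [r [hA hkeep]]] := branch_glue hF hh hf hhf uh uf hR tRh hS2 tS.
exists A, r; split => //; apply: terminal_on_setU; apply: hkeep => //; last exact: rest_e.
  exact: terminal_on_subset (subsetUl k h) tR.
Qed.

Lemma pendant_realizable_step : pendant_realizable F.
Proof.
move=> h e hh hpend; have [heF heh [w hw] he1] := hpend.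
have [/exists_inP[f hf /existsP[u /and5P[fh fe uh uf hS]]] | thin] :=
  boolP [exists f in F, exists u, [&& f != h, f != e, u \in h, u \in f & 1 < #|branch F h f|]].
  have hhf : h != f by rewrite eq_sym.
  have /andP[we wh] := setI1_mem hw.
  have heR : e \in F :\: branch F h f.
    rewrite in_setD heF andbT; apply/negP => heS.
    have wu := branch_meets_at hF hh hf hhf uh uf heS we wh; rewrite wu in we.
    by case: (edge_through_deg2 hF hh hf heF hhf uh uf we) => ee; rewrite ee eqxx in heh fe.
  have hR := rest_e f hh.
  have hRE : F :\: branch F h f \subset E := subset_trans (subsetDl _ _) hF.
  have hR2 : 1 < #|F :\: branch F h f| by apply/card_gt1P; exists e, h.
  have [pR _] := IH (rest_card hf hhf) hRE (@rest_connected F h f hconn) hR2.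
  have pendR : pendant (F :\: branch F h f) h e.
    split => //; first by exists w.
    by move=> x xe xh; exact: degree_eq1_subset (subsetDl _ _) heR xe (he1 x xe xh).
  exact: realizable_split hh hf hhf uh uf hS heR (pR h e hR pendR).
rewrite /realizable_on setUC; apply: (star_realizable hF _ heF heh).
apply: star_of_thin_branches => // f u hf fh uh uf.
have [-> | fe] := eqVneq f e; last first.
  rewrite leqNgt; apply: contraNN thin => hS; apply/exists_inP; exists f => //.
  by apply/existsP; exists u; rewrite fh fe uh uf.
apply: branch_isolated => W; apply/negP => /and4P[_ /setD1P[Wh WF] eW /not_disjointP[x xe xW]].
have [xh | xh] := boolP (x \in h).
  by case: (edge_through_deg2 hF heF hh WF heh xe xh xW) => eW'; rewrite eW' eqxx in eW Wh.
by move: eW; rewrite (degree1_edge_eq (he1 x xe xh) heF WF xe xW) eqxx.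
Qed.

Lemma edge_realizable_step : edge_realizable F.
Proof.
move=> e he.
have [/exists_inP[f hf /existsP[u /and4P[fe ue uf hS]]] | thin] :=
  boolP [exists f in F, exists u, [&& f != e, u \in e, u \in f & 1 < #|branch F e f|]];
  last first.
  have [d hd de] : exists2 d, d \in F & d != e.
    have /card_gt1P[a [b [ha hb ab]]] := hF2.
    by have [ae | ae] := eqVneq a e; [exists b; rewrite // -ae eq_sym | exists a].
  have hst : star F e.
    apply: star_of_thin_branches => // f u hf fe ue uf; rewrite leqNgt.
    apply: contraNN thin => hS; apply/exists_inP; exists f => //.
    by apply/existsP; exists u; rewrite fe ue uf.
  have [A [r [hA tA]]] := star_realizable hF hst hd de.
  by exists A, r; split => //; apply: terminal_on_subset tA; apply: subsetUl.
have hef : e != f by rewrite eq_sym.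
have [/exists_inP[f' hf'R /andP[f'e hdis]] | leaf] :=
  boolP [exists f' in F :\: branch F e f, (f' != e) && ~~ [disjoint e & f']].
  have heR := rest_e f he.
  have hRE : F :\: branch F e f \subset E := subset_trans (subsetDl _ _) hF.
  have hR2 : 1 < #|F :\: branch F e f| by apply/card_gt1P; exists e, f'; rewrite eq_sym.
  have [_ eR] := IH (rest_card hf hef) hRE (@rest_connected F e f hconn) hR2.
  have eRe : realizable_on (F :\: branch F e f) (e :|: e) by rewrite setUid; exact: eR e heR.
  by have := realizable_split he hf hef ue uf hS heR eRe; rewrite setUid.
have hpend : pendant F f e.
  split => //.
    exists u; apply/setP => x; rewrite !inE; apply/andP/eqP => [[xe xf] | ->//].
    exact: linear_common_vertex (subsetP hF _ he) (subsetP hF _ hf) hef xe xf ue uf.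
  move=> x xe xf; apply/eqP; rewrite eqn_leq (degree_gt0 he xe) andbT.
  apply: (degree_le1 (X := e)) => Z hZ xZ; have [// | Ze] := eqVneq Z e.
  have ZS : Z \in branch F e f.
    apply: contraNT leaf => ZS; apply/exists_inP; exists Z; first by rewrite in_setD ZS.
    by rewrite Ze; apply/not_disjointP; exists x.
  by rewrite (branch_meets_at hF he hf hef ue uf ZS xZ xe) uf in xf.
have [A [r [hA tA]]] := pendant_realizable_step hf hpend.
by exists A, r; split => //; apply: terminal_on_subset tA; apply: subsetUl.
Qed.

End Recursion.

Lemma connected_realizable n F : #|F| <= n -> F \subset E -> edges_connected F -> 1 < #|F| ->
  pendant_realizable F /\ edge_realizable F.
Proof.
elim: n F => [|n IH] F hn hF hconn hF2; first by move: hF2; rewrite ltnNge (leq_trans hn).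
have IHF G : #|G| < #|F| -> G \subset E -> edges_connected G -> 1 < #|G| ->
    pendant_realizable G /\ edge_realizable G.
  by move=> hG; apply: IH; rewrite -ltnS (leq_trans hG hn).
by split; [exact: pendant_realizable_step | exact: edge_realizable_step].
Qed.

(* A single-edge component becomes the in-neighbourhood of a source of the rest; a larger
   one is realized on its own. *)
Lemma realization_add_component F Z A1 r1 x : F \subset E -> Z \in F ->
  realization (F :\: component F Z) A1 r1 -> x \in cover (F :\: component F Z) ->
  exists A r, realization F A r.
Proof.
move=> hF hZ hD hx; set C := component F Z.
have eF : (F :\: C) :|: C = F := setDUK_subset (component_subset F Z).
have hsimple : simple_loopless ((F :\: C) :|: C).
  by rewrite eF; exact: simple_loopless_subset hF E_simple.
have disj y : y \in cover (F :\: C) -> y \in cover C -> False.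
  by move=> yD /component_cover_disjoint; rewrite yD.
have [hC1 | hC2] := leqP #|C| 1.
  have eC : C = [set Z].
    by apply/eqP; rewrite eq_sym eqEcard sub1set component_self // cards1.
  have [c cD csrc] := realization_source hD hx.
  have cZ : c \notin Z by apply/negP => cZ; apply: (disj c cD); rewrite eC cover1.
  have eFZ : (F :\: C) :|: [set Z] = F by rewrite -eC.
  have hsimpleZ : simple_loopless ((F :\: C) :|: [set Z]) by rewrite eFZ -{1}eF.
  rewrite -eFZ; eexists; eexists; apply: realization_add_in_star hD hsimpleZ cD csrc cZ _.
  by move=> y yZ yD; exfalso; apply: (disj y yD); rewrite eC cover1.
have hCE := subset_trans (component_subset F Z) hF.
have [_ eC] := connected_realizable (leqnn _) hCE (component_connected hZ) hC2.
have [A2 [r2 [hC _]]] := eC Z (component_self hZ).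
have [r hr] := realization_relU (u := x) hD hC hsimple (fun y yD yC => False_ind _ (disj y yD yC))
  (fun xD xC => False_ind _ (disj x xD xC)).
by exists (relU A1 A2), r; rewrite -eF.
Qed.

Lemma realizable_with_meeting_edges n F X Y : #|F| <= n -> F \subset E ->
  X \in F -> Y \in F -> X != Y -> ~~ [disjoint X & Y] -> exists A r, realization F A r.
Proof.
elim: n F => [|n IH] F hn hF hX hY XY hXY.
  by move: hn; rewrite leqn0 => /eqP/cards0_eq F0; rewrite F0 inE in hX.
have [x xX] : exists x, x \in X by apply/card_gt0P; apply: ltn_trans (E_ge3 (subsetP hF _ hX)).
have [hFX | /subsetPn[Z hZ ZX]] := boolP (F \subset component F X).
  have eF : component F X = F by apply/eqP; rewrite eqEsubset component_subset.
  have hconn : edges_connected F by rewrite -eF; exact: component_connected.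
  have hF2 : 1 < #|F| by apply/card_gt1P; exists X, Y.
  have [_ eR] := connected_realizable (leqnn _) hF hconn hF2.
  by have [A [r [hA _]]] := eR X hX; exists A, r.
set C := component F Z.
have XC : X \notin C.
  apply: contra ZX; rewrite !inE hX hZ /= => hZX.
  by rewrite (sym_connect_sym (@meets_sym F)).
have YC : Y \notin C.
  by apply: contra XC => YC; apply: component_closed YC hX _; rewrite disjoint_sym.
have hXD : X \in F :\: C by rewrite in_setD XC.
have hYD : Y \in F :\: C by rewrite in_setD YC.
have hDn : #|F :\: C| <= n.
  rewrite -ltnS; apply: leq_trans hn; apply/proper_card/properP; split; first exact: subsetDl.
  by exists Z => //; rewrite in_setD component_self.
have [A1 [r1 hD]] := IH _ hDn (subset_trans (subsetDl _ _) hF) hXD hYD XY hXY.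
exact: realization_add_component hF hZ hD (mem_cover hXD xX).
Qed.

End LinearHypertree.

Theorem theorem2 (T : finType) (E : {set {set T}}) :
  simple_loopless E -> linear_hg E -> hypertree E ->
  max_degree E = 2 -> has_antirank E 3 ->
  exists A : rel T, [/\ digraph A, acyclic A & niche_hypergraph A = E].
Proof.
move=> hsimple hlin [g [[gsym [girr [_ gacyc]]] hsub]] hmax [_ hge3].
have hdeg v : degree E v <= 2 by rewrite -hmax; exact: (leq_bigmax (F := degree E) v).
have [v hv] : {v | degree E v = 2}.
  case: (pickP (@predT T)) => [v0 _ | T0]; last by move: hmax; rewrite /max_degree big_pred0.
  have hT : 0 < #|T| by apply/card_gt0P; exists v0.
  by have [v hv] := eq_bigmax (degree E) hT; exists v; rewrite -hv.
have /card_gt1P[X [Y [hX hY XY]]] : 1 < degree E v by rewrite hv.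
move: hX hY; rewrite !inE => /andP[hX vX] /andP[hY vY].
have hXY : ~~ [disjoint X & Y] by apply/not_disjointP; exists v.
have [A [r hA]] := realizable_with_meeting_edges hsimple hge3 hdeg hlin gsym girr gacyc hsub
  (leqnn #|E|) (subxx E) hX hY XY hXY.
exists A; have [_ hr _ _] := hA; split.
- exact: rank_increasing_digraph hr.
- exact: rank_increasing_acyclic hr.
- exact: realization_niche_hypergraph hsimple.1 hA.
Qed.
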